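(* Let $D$ be an $n\times n$ positive definite density matrix. Assume that $f,g$ are standard functions such that $$g(x)\ge c\,\frac{(x-1)^2}{f(x)}\qquad\text{for all }x>0$$ for some constant $c>0$. Then for all $n\times n$ self-adjoint matrices $A_1,\dots,A_m$, $$\mathrm{Det}\Big(\big[\mathrm{qCov}^g_D(A_i,A_j)\big]_{i,j=1}^m\Big)\ \ge\ \mathrm{Det}\Big(\big[c\,\gamma^f_D([D,A_i],[D,A_j])\big]_{i,j=1}^m\Big).$$ Moreover, equality holds if and only if the matrices $A_i-(\mathrm{Tr}\,DA_i)I$, $1\le i\le m$, are linearly dependent, and in that case both sides are zero.
   Context: A function $f:(0,\infty)\to(0,\infty)$ is called standard if it is operator monotone, $f(1)=1$ and $f(t)=tf(t^{-1})$ for all $t>0$. For a standard $f$ define the mean $M_f(a,b):=bf(a/b)$ for $a,b>0$. For a positive definite density matrix $D$ (i.e. $D>0$, $\mathrm{Tr}\,D=1$), let $\mathbf L_D(X)=DX$, $\mathbf R_D(X)=XD$ on $n\times n$ complex matrices and $\mathbb J^f_D:=f(\mathbf L_D\mathbf R_D^{-1})\mathbf R_D$. The quantum Fisher information is $\gamma^f_D(A,B):=\mathrm{Tr}\,A^*(\mathbb J^f_D)^{-1}(B)$ and the quantum covariance is $\mathrm{qCov}^f_D(A,B):=\mathrm{Tr}\,A^*\mathbb J^f_D(B)-(\mathrm{Tr}\,DA^* )(\mathrm{Tr}\,DB)$. Equivalently, if $D=\mathrm{Diag}(\lambda_1,\dots,\lambda_n)$ with $\lambda_i>0$, then $\gamma^f_D(A,B)=\sum_{i,j}\frac{1}{M_f(\lambda_i,\lambda_j)}\overline{A_{ij}}B_{ij}$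 and $\mathrm{qCov}^f_D(A,B)=\sum_{i,j}M_f(\lambda_i,\lambda_j)\overline{A_{ij}}B_{ij}-\big(\sum_i\lambda_i\overline{A_{ii}}\big)\big(\sum_i\lambda_iB_{ii}\big)$. $[D,A]=DA-AD$, and $I$ is the identity matrix. *)

From HB Require Import structures.
From mathcomp Require Import all_boot all_order all_algebra.
From mathcomp Require Import reals.
From mathcomp Require Import complex.
Set Implicit Arguments. Unset Strict Implicit. Unset Printing Implicit Defensive.
Import Order.TTheory GRing.Theory Num.Theory.
Local Open Scope ring_scope.

Section Defs.
Variable R : realType.
Local Notation C := (R[i]).

Definition toC (x : R) : C := Complex x 0.

Definition mxstar (p q : nat) (A : 'M[C]_(p, q)) : 'M[C]_(q, p) :=
  (map_mx Num.conj A)^T.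

Definition selfadjoint (n : nat) (A : 'M[C]_n) : Prop := mxstar A = A.

Definition unitary (n : nat) (U : 'M[C]_n) : Prop := mxstar U *m U = 1%:M.

Definition loewner_le (n : nat) (A B : 'M[C]_n) : Prop :=
  forall x : 'cV[C]_n, 0 <= (mxstar x *m (B - A) *m x) 0 0.

Definition udiag (n : nat) (U : 'M[C]_n) (a : 'I_n -> R) : 'M[C]_n :=
  U *m diag_mx (\row_i toC (a i)) *m mxstar U.

(* f is operator monotone on (0,oo): for all positive definite A <= B of any
   size, f(A) <= f(B), where f(A) is defined through a spectral decomposition
   A = U Diag(a) U^*, f(A) = U Diag(f a) U^*. *)
Definition operator_monotone (f : R -> R) : Prop :=
  forall (n : nat) (U V : 'M[C]_n) (a b : 'I_n -> R),
    unitary U -> unitary V -> (forall i, 0 < a i) -> (forall i, 0 < b i) ->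
    loewner_le (udiag U a) (udiag V b) ->
    loewner_le (udiag U (fun i => f (a i))) (udiag V (fun i => f (b i))).

Definition standard (f : R -> R) : Prop :=
  [/\ (forall t, 0 < t -> 0 < f t),
      operator_monotone f,
      f 1 = 1 &
      forall t, 0 < t -> f t = t * f t^-1].

Definition mean (f : R -> R) (a b : R) : R := b * f (a / b).

(* For D = U Diag(lam) U^* (U unitary, lam > 0), the quantities below are the
   coordinate expressions of gamma^f_D and qCov^f_D in the eigenbasis of D:
   A' := U^* A U. *)
Definition qFisher (n : nat) (f : R -> R) (U : 'M[C]_n) (lam : 'I_n -> R)
    (A B : 'M[C]_n) : C :=
  let A' := mxstar U *m A *m U in
  let B' := mxstar U *m B *m U in
  \sum_(i < n) \sum_(j < n)
     toC (mean f (lam i) (lam j))^-1 * Num.conj (A' i j) * B' i j.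

Definition qCov (n : nat) (f : R -> R) (U : 'M[C]_n) (lam : 'I_n -> R)
    (A B : 'M[C]_n) : C :=
  let A' := mxstar U *m A *m U in
  let B' := mxstar U *m B *m U in
  \sum_(i < n) \sum_(j < n)
     toC (mean f (lam i) (lam j)) * Num.conj (A' i j) * B' i j
  - (\sum_(i < n) toC (lam i) * Num.conj (A' i i))
    * (\sum_(i < n) toC (lam i) * B' i i).

Definition commutator (n : nat) (D A : 'M[C]_n) : 'M[C]_n := D *m A - A *m D.

Definition lin_dependent (n m : nat) (B : 'I_m -> 'M[C]_n) : Prop :=
  exists k : 'I_m -> C, (exists i, k i != 0) /\ \sum_(i < m) k i *: B i = 0.

End Defs.

(* In the eigenbasis of D, write B_k = A_k - Tr(D A_k) I and X_k = U^* B_k U.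
   Centring does not change the commutators, so both sides become weighted
   Gram determinants of the vectors (X_k)_{ij}: with weights M_g(l_i, l_j) for
   the covariance and c (l_i - l_j)^2 / M_f(l_i, l_j) for the Fisher side.
   The hypothesis on f and g, sharpened through f(2x) <= 2 f(x), makes the
   second weight strictly smaller than the first.  By Cauchy-Binet a weighted
   Gram determinant is (1/m!) sum_phi prod_a w(phi a) |det Z_phi|^2 over the
   m x m minors Z_phi, hence monotone in the weights, and strictly so unless
   every minor vanishes, i.e. unless the X_k are linearly dependent. *)

From HB Require Import structures.
From mathcomp Require Import all_boot all_order all_algebra.
From mathcomp Require Import reals.
From mathcomp Require Import complex.
From mathcomp Require Import perm ring lra.
Set Implicit Arguments. Unset Strict Implicit. Unset Printing Implicit Defensive.
Import Order.TTheory GRing.Theory Num.Theory.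
Local Open Scope ring_scope.

Section WeightedGram.
Variables (C : numClosedFieldType) (m : nat) (S : finType) (Y : 'I_m -> S -> C).

Definition weighted_gram (w : S -> C) : 'M[C]_m :=
  \matrix_(a, b) \sum_s w s * Num.conj (Y a s) * Y b s.

Definition gram_minor (phi : {ffun 'I_m -> S}) : 'M[C]_m :=
  \matrix_(a, b) Y b (phi a).

Definition rows_dependent : Prop :=
  exists k : 'I_m -> C, (exists a, k a != 0) /\ forall s, \sum_a k a * Y a s = 0.

Lemma det_weighted_gram_expand w : \det (weighted_gram w) =
  \sum_(phi : {ffun 'I_m -> S})
     (\prod_a (w (phi a) * Num.conj (Y a (phi a)))) * \det (gram_minor phi).
Proof.
rewrite /determinant.
under eq_bigr => s _.
  rewrite (eq_bigr (fun a => \sum_t w t * Num.conj (Y a t) * Y (s a) t));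
    last by move=> a _; rewrite mxE.
  rewrite bigA_distr_bigA mulr_sumr /=.
  over.
rewrite exchange_big /=; apply: eq_bigr => phi _.
rewrite mulr_sumr /=; apply: eq_bigr => s _.
rewrite big_split /= mulrCA; congr (_ * (_ * _)).
by apply: eq_bigr => a _; rewrite mxE.
Qed.

Lemma det_gram_minor_perm (phi : {ffun 'I_m -> S}) (t : 'S_m) :
  \det (gram_minor [ffun a => phi (t a)]) = (-1) ^+ t * \det (gram_minor phi).
Proof.
have -> : gram_minor [ffun a => phi (t a)] = row_perm t (gram_minor phi).
  by apply/matrixP => a b; rewrite !mxE ffunE.
by rewrite row_permE det_mulmx det_perm.
Qed.

(* Cauchy-Binet in disguise: symmetrizing the expansion over the row order of
   each minor turns the product of conjugated entries into a conjugated minor. *)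
Lemma det_weighted_gram w : (m`!)%:R * \det (weighted_gram w) =
  \sum_(phi : {ffun 'I_m -> S})
     (\prod_a w (phi a)) * (\det (gram_minor phi) * Num.conj (\det (gram_minor phi))).
Proof.
rewrite -card_Sn mulr_natl -sumr_const.
transitivity (\sum_(t : 'S_m) \sum_(phi : {ffun 'I_m -> S})
   (\prod_a (w (phi (t a)) * Num.conj (Y a (phi (t a))))) *
       ((-1) ^+ t * \det (gram_minor phi))).
  apply: eq_bigr => t _; rewrite det_weighted_gram_expand.
  have perm_ffun_inj :
      injective (fun phi : {ffun 'I_m -> S} => [ffun a => phi (t a)]).
    move=> p q /ffunP H; apply/ffunP => x.
    by have := H (t^-1 x)%g; rewrite !ffunE permKV.
  rewrite (reindex_inj perm_ffun_inj) /=; apply: eq_bigr => phi _.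
  rewrite det_gram_minor_perm; congr (_ * _).
  by apply: eq_bigr => a _; rewrite ffunE.
rewrite exchange_big /=; apply: eq_bigr => phi _.
have prod_w_perm (t : 'S_m) : \prod_a w (phi (t a)) = \prod_a w (phi a).
  by rewrite [RHS](reindex_inj (@perm_inj _ t)).
rewrite (eq_bigr (fun t : 'S_m => \det (gram_minor phi) *
    (\prod_a w (phi a) * ((-1) ^+ t * \prod_a Num.conj (Y a (phi (t a))))))); last first.
  move=> t _; rewrite big_split /= prod_w_perm mulrC mulrACA -mulrA.
  by rewrite mulrCA [RHS]mulrCA; congr (_ * _); exact: mulrCA.
rewrite -!big_distrr /= mulrCA; congr (_ * (_ * _)).
rewrite -det_tr /determinant rmorph_sum /=; apply: eq_bigr => t _.
rewrite rmorphM rmorph_prod rmorph_sign /=; congr (_ * _).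
by apply: eq_bigr => a _; rewrite !mxE.
Qed.

Lemma det_gram_minor_dep phi : rows_dependent -> \det (gram_minor phi) = 0.
Proof.
move=> [k [[a ka] hk]]; rewrite -det_tr; apply/eqP/det0P.
exists (\row_a k a); first by apply/rV0Pn; exists a; rewrite mxE.
apply/rowP => b; rewrite !mxE -[RHS](hk (phi b)); apply: eq_bigr => a' _.
by rewrite !mxE.
Qed.

Definition gram_rows : 'M[C]_(m, #|S|) := \matrix_(a, t) Y a (enum_val t).

Lemma rows_dependentP : reflect rows_dependent (~~ row_free gram_rows).
Proof.
apply: (iffP idP) => [|[k [[a ka] hk]]].
  rewrite -kermx_eq0 => /rowV0Pn [v /sub_kermxP vM v0].
  exists (fun a => v 0 a); split; first exact/rV0Pn.
  move=> s; have := congr1 (fun X : 'rV[C]_#|S| => X 0 (enum_rank s)) vM.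
  rewrite !mxE => vM_s; rewrite -[RHS]vM_s; apply: eq_bigr => b _.
  by rewrite !mxE enum_rankK.
have kM0 : \row_b k b *m gram_rows = 0 *m gram_rows.
  rewrite mul0mx; apply/rowP => t; rewrite !mxE -[RHS](hk (enum_val t)).
  by apply: eq_bigr => b _; rewrite !mxE.
by apply/negP => /row_free_inj/(_ _ _ kM0)/rowP/(_ a); rewrite !mxE; apply/eqP.
Qed.

Lemma exists_det_gram_minor_neq0 :
  row_free gram_rows -> exists phi, \det (gram_minor phi) != 0.
Proof.
move=> free; have fullT : row_full gram_rows^T by rewrite /row_full mxrank_tr.
exists [ffun a => enum_val (fullrankfun fullT a)].
have -> : gram_minor [ffun a => enum_val (fullrankfun fullT a)] =
          rowsub (fullrankfun fullT) gram_rows^T.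
  by apply/matrixP => a b; rewrite !mxE ffunE.
by rewrite -unitfE -unitmxE fullrowsub_unit.
Qed.

Lemma det_weighted_gram_dep w : rows_dependent -> \det (weighted_gram w) = 0.
Proof.
move=> dep; have := det_weighted_gram w.
rewrite big1 => [/eqP|phi _]; last by rewrite det_gram_minor_dep // mul0r mulr0.
by rewrite mulf_eq0 pnatr_eq0 (negbTE (lt0n_neq0 (fact_gt0 m))) => /eqP.
Qed.

Lemma det_weighted_gram_le w1 w2 : (forall s, 0 <= w2 s <= w1 s) ->
  \det (weighted_gram w2) <= \det (weighted_gram w1).
Proof.
move=> hw; have mfact_gt0 : 0 < (m`!)%:R :> C by rewrite ltr0n fact_gt0.
rewrite -(ler_pM2l mfact_gt0) !det_weighted_gram; apply: ler_sum => phi _.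
apply: ler_wpM2r; first exact: mul_conjC_ge0.
by apply: ler_prod => a _; apply: hw.
Qed.

Lemma det_weighted_gram_lt w1 w2 : (0 < m)%N ->
  (forall s, 0 <= w2 s < w1 s) -> row_free gram_rows ->
  \det (weighted_gram w2) < \det (weighted_gram w1).
Proof.
move=> m_gt0 hw free; have mfact_gt0 : 0 < (m`!)%:R :> C by rewrite ltr0n fact_gt0.
have [phi0 minor0_neq0] := exists_det_gram_minor_neq0 free.
rewrite -(ltr_pM2l mfact_gt0) !det_weighted_gram (bigD1 phi0) //=.
rewrite [X in _ < X](bigD1 phi0) //=; apply: ltr_leD.
  rewrite ltr_pM2r ?mul_conjC_gt0 //.
  apply: ltr_prod => [|a _]; last exact: hw.
  by apply/hasP; exists (Ordinal m_gt0); rewrite ?mem_index_enum.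
apply: ler_sum => phi _; apply: ler_wpM2r; first exact: mul_conjC_ge0.
by apply: ler_prod => a _; have /andP[-> /ltW] := hw (phi a).
Qed.

Lemma det_weighted_gram_eq w1 w2 : (0 < m)%N -> (forall s, 0 <= w2 s < w1 s) ->
  \det (weighted_gram w1) = \det (weighted_gram w2) <-> rows_dependent.
Proof.
move=> m_gt0 hw; split => [eq_det|dep]; last by rewrite !det_weighted_gram_dep.
apply/rows_dependentP/negP => free.
by have := det_weighted_gram_lt m_gt0 hw free; rewrite eq_det ltxx.
Qed.

End WeightedGram.

Section SesquilinearShift.
Variables (C : numClosedFieldType) (n : nat).

Lemma sum_delta_mull (F : 'I_n -> C) i : \sum_j (i == j)%:R * F j = F i.
Proof.
rewrite (bigD1 i) //= eqxx mul1r big1 ?addr0 // => j ji.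
by rewrite eq_sym (negbTE ji) mul0r.
Qed.

Lemma weighted_sum_shift (w : 'I_n -> 'I_n -> C) (X1 X2 : 'M[C]_n) (t1 t2 : C) :
  \sum_i \sum_j w i j * Num.conj ((X1 - t1%:M) i j) * (X2 - t2%:M) i j =
  \sum_i \sum_j w i j * Num.conj (X1 i j) * X2 i j
  - (Num.conj t1 * (\sum_i w i i * X2 i i) + t2 * (\sum_i w i i * Num.conj (X1 i i))
     - Num.conj t1 * t2 * (\sum_i w i i)).
Proof.
pose b i := w i i * (Num.conj t1 * X2 i i + t2 * Num.conj (X1 i i) - Num.conj t1 * t2).
have entry_shift i j : w i j * Num.conj ((X1 - t1%:M) i j) * (X2 - t2%:M) i j =
    w i j * Num.conj (X1 i j) * X2 i j - (i == j)%:R * b j.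
  rewrite !mxE rmorphB rmorphMn /b.
  by case: eqP => [->|_]; rewrite ?mulr1n ?mulr0n /=; ring.
under eq_bigr do rewrite (eq_bigr _ (fun j _ => entry_shift _ j)) sumrB sum_delta_mull.
rewrite sumrB; congr (_ - _).
rewrite !mulr_sumr -big_split -sumrB /=.
by apply: eq_bigr => i _; rewrite /b; ring.
Qed.

End SesquilinearShift.

Section StandardFunctions.
Variable R : realType.
Local Notation C := (R[i]).

Lemma toCE (x : R) : toC x = (x%:C)%C.
Proof. by []. Qed.

Lemma toC_conj (x : R) : Num.conj (toC x) = toC x.
Proof. exact: conjc_real. Qed.

Lemma unitary1 n : unitary (1%:M : 'M[C]_n).
Proof. by rewrite /unitary /mxstar map_mx1 trmx1 mul1mx. Qed.

Lemma loewner_le_scalar (r s : R) :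
  loewner_le (udiag 1%:M (fun _ : 'I_1 => r)) (udiag 1%:M (fun _ => s)) <-> r <= s.
Proof.
have quadE (x : 'cV[C]_1) :
    (mxstar x *m (udiag 1%:M (fun _ => s) - udiag 1%:M (fun _ => r)) *m x) 0 0
    = toC (s - r) * (x 0 0 * Num.conj (x 0 0)).
  rewrite /udiag /mxstar map_mx1 trmx1 mul1mx !mulmx1 !mxE !big_ord1 !mxE /=.
  rewrite big_ord_recl big_ord0 !mxE /= [X in _ - X]big_ord_recl big_ord0 !mxE /=.
  rewrite !mulr1n mul1r !addr0 /toC -(rmorphB (real_complex R)) /=.
  by rewrite mulrAC [_ * x ord0 0]mulrC [RHS]mulrC.
split => [/(_ (const_mx 1))|rs x]; rewrite quadE.
  by rewrite !mxE rmorph1 !mulr1 /toC lecR subr_ge0.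
by rewrite mulr_ge0 ?mul_conjC_ge0 // /toC lecR subr_ge0.
Qed.

Lemma operator_monotone_le (f : R -> R) : operator_monotone f ->
  forall a b, 0 < a -> a <= b -> f a <= f b.
Proof.
move=> fom a b a_gt0 ab; apply/loewner_le_scalar.
apply: fom (unitary1 1) (unitary1 1) _ _ _ => // [_|]; first exact: lt_le_trans ab.
exact/loewner_le_scalar.
Qed.

Section Standard.
Variable f : R -> R.
Hypothesis f_std : standard f.

Lemma standard_gt0 x : 0 < x -> 0 < f x.
Proof. by case: f_std => f_gt0 _ _ _; apply: f_gt0. Qed.

Lemma standard_inv x : 0 < x -> f x^-1 = f x / x.
Proof.
case: f_std => _ _ _ f_sym x_gt0.
by rewrite [in RHS](f_sym x x_gt0) mulrC mulrA mulVf ?mul1r ?gt_eqF.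
Qed.

Lemma standard_div_le x y : 0 < x -> x <= y -> f y / y <= f x / x.
Proof.
move=> x_gt0 xy; have y_gt0 := lt_le_trans x_gt0 xy.
rewrite -!standard_inv //; case: f_std => _ f_om _ _.
by apply: operator_monotone_le; rewrite ?invr_gt0 // lef_pV2.
Qed.

End Standard.

Section MeanComparison.
Variables (f g : R -> R) (c : R).
Hypotheses (f_std : standard f) (g_std : standard g) (c_gt0 : 0 < c).
Hypothesis g_ge : forall x, 0 < x -> c * (x - 1) ^+ 2 / f x <= g x.

(* At [2x] the hypothesis gives [c (2x - 1)^2 <= g(2x) f(2x) <= 4 g(x) f(x)],
   and [c (x - 1/2)^2 > c (x - 1)^2] for [x > 1]. *)
Lemma sq_lt_prod_gt1 x : 1 < x -> c * (x - 1) ^+ 2 < g x * f x.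
Proof.
move=> x_gt1; have x_gt0 : 0 < x := lt_trans ltr01 x_gt1.
have x2_gt0 : 0 < 2 * x by rewrite mulr_gt0.
have x_le2x : x <= 2 * x by lra.
have double_le h : standard h -> h (2 * x) <= 2 * h x.
  move=> h_std; have := standard_div_le h_std x_gt0 x_le2x.
  rewrite ler_pdivrMr // => /le_trans; apply.
  by rewrite mulrCA divfK ?gt_eqF.
have := g_ge x2_gt0; rewrite ler_pdivrMr ?(standard_gt0 f_std) // => at_2x.
have prod_2x : g (2 * x) * f (2 * x) <= (2 * g x) * (2 * f x).
  apply: ler_pM; rewrite ?double_le //.
    exact/ltW/(standard_gt0 g_std).
  exact/ltW/(standard_gt0 f_std).
have : 0 < c * (4 * x - 3) by rewrite mulr_gt0 // subr_gt0; lra.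
nra.
Qed.

Lemma sq_lt_prod x : 0 < x -> c * (x - 1) ^+ 2 < g x * f x.
Proof.
move=> x_gt0; case: (ltgtP x 1) => [x_lt1|x_gt1|->]; last 1 first.
- by case: f_std => _ _ -> _; case: g_std => _ _ -> _; rewrite subrr expr0n mulr0 mulr1.
- have inv_gt1 : 1 < x^-1 by rewrite invf_gt1.
  have := sq_lt_prod_gt1 inv_gt1; rewrite (standard_inv f_std) ?(standard_inv g_std) //.
  have -> : (x^-1 - 1) ^+ 2 = (x - 1) ^+ 2 / x ^+ 2 by field; rewrite gt_eqF.
  have -> : g x / x * (f x / x) = g x * f x / x ^+ 2 by field; rewrite gt_eqF.
  by rewrite mulrA ltr_pM2r // invr_gt0 exprn_gt0.
- exact: sq_lt_prod_gt1.
Qed.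

Lemma mean_weight_lt a b : 0 < a -> 0 < b ->
  0 <= c * (mean f a b)^-1 * (a - b) ^+ 2 < mean g a b.
Proof.
move=> a_gt0 b_gt0; have x_gt0 : 0 < a / b by rewrite divr_gt0.
have fx_gt0 := standard_gt0 f_std x_gt0.
have mean_f_gt0 : 0 < mean f a b by rewrite /mean mulr_gt0.
rewrite mulr_ge0 ?sqr_ge0 ?mulr_ge0 ?invr_ge0 ?ltW //=.
have -> : c * (mean f a b)^-1 * (a - b) ^+ 2 = b * (c * (a / b - 1) ^+ 2 / f (a / b)).
  by rewrite /mean; field; rewrite !gt_eqF.
by rewrite /mean ltr_pM2l // ltr_pdivrMr // sq_lt_prod.
Qed.

End MeanComparison.

End StandardFunctions.

Section EigenCoordinates.
Variable R : realType.
Local Notation C := (R[i]).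

Lemma commutator_scalar_shift n (D M : 'M[C]_n) (t : C) :
  commutator D (M - t *: 1%:M) = commutator D M.
Proof.
rewrite /commutator mulmxBr mulmxBl -scalemxAr -scalemxAl mulmx1 mul1mx.
by rewrite opprB addrA subrK.
Qed.

Lemma commutator_diag_mxE n (d : 'rV[C]_n) (M : 'M[C]_n) i j :
  commutator (diag_mx d) M i j = (d 0 i - d 0 j) * M i j.
Proof. by rewrite /commutator mul_diag_mx mul_mx_diag !mxE mulrBl [M i j * _]mulrC. Qed.

Variables (n : nat) (U D : 'M[C]_n) (lam : 'I_n -> R).
Hypotheses (U_unitary : unitary U) (D_udiag : D = udiag U lam).
Local Notation coord M := (mxstar U *m M *m U).
Local Notation Lam := (diag_mx (\row_i toC (lam i))).

Lemma unitary_mulmx_mxstar : U *m mxstar U = 1%:M.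
Proof. exact: mulmx1C U_unitary. Qed.

Lemma coordK M : U *m coord M *m mxstar U = M.
Proof. by rewrite !mulmxA unitary_mulmx_mxstar mul1mx -mulmxA unitary_mulmx_mxstar mulmx1. Qed.

Lemma coord_udiag : coord D = Lam.
Proof. by rewrite D_udiag /udiag !mulmxA U_unitary mul1mx -mulmxA U_unitary mulmx1. Qed.

Lemma coord_scalar_shift M t : coord (M - t *: 1%:M) = coord M - t%:M.
Proof. by rewrite mulmxBr mulmxBl -scalemxAr -scalemxAl mulmx1 U_unitary scalemx1. Qed.

Lemma coord_commutator M : coord (commutator D M) = commutator Lam (coord M).
Proof.
rewrite -coord_udiag /commutator mulmxBr mulmxBl.
by congr (_ - _); rewrite !mulmxA -[_ *m U *m mxstar U]mulmxA unitary_mulmx_mxstar mulmx1.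
Qed.

Lemma mxtrace_mulD M : \tr (D *m M) = \sum_i toC (lam i) * coord M i i.
Proof.
rewrite D_udiag /udiag -!mulmxA mxtrace_mulC -!mulmxA [mxstar U *m (M *m U)]mulmxA.
by apply: eq_bigr => i _; rewrite mul_diag_mx !mxE.
Qed.

Lemma mxtrace_udiag : \tr D = \sum_i toC (lam i).
Proof.
rewrite -[D]mulmx1 mxtrace_mulD; apply: eq_bigr => i _.
by rewrite mulmx1 U_unitary mxE eqxx mulr1.
Qed.

Lemma qCov_centered (g : R -> R) M1 M2 :
  g 1 = 1 -> (forall i, 0 < lam i) -> \tr D = 1 ->
  qCov g U lam M1 M2 =
  \sum_i \sum_j toC (mean g (lam i) (lam j))
     * Num.conj (coord (M1 - \tr (D *m M1) *: 1%:M) i j)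
     * coord (M2 - \tr (D *m M2) *: 1%:M) i j.
Proof.
move=> g1 lam_gt0 trD1; rewrite !coord_scalar_shift weighted_sum_shift /qCov /=.
have mean_diag i : toC (mean g (lam i) (lam i)) = toC (lam i).
  by rewrite /mean divff ?gt_eqF // g1 mulr1.
have diag_sum (F : 'I_n -> C) :
    \sum_i toC (mean g (lam i) (lam i)) * F i = \sum_i toC (lam i) * F i.
  by apply: eq_bigr => i _; rewrite mean_diag.
have diag_sum1 : \sum_i toC (mean g (lam i) (lam i)) = 1.
  by rewrite -trD1 mxtrace_udiag; apply: eq_bigr => i _; rewrite mean_diag.
have conj_tr M : Num.conj (\tr (D *m M)) = \sum_i toC (lam i) * Num.conj (coord M i i).
  by rewrite mxtrace_mulD rmorph_sum; apply: eq_bigr => i _; rewrite rmorphM /= toC_conj.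
rewrite !diag_sum diag_sum1 conj_tr !mxtrace_mulD mulr1; congr (_ - _).
by rewrite [X in X - _]addrC addrK mulrC.
Qed.

Lemma qFisher_commutator (f : R -> R) (c : R) M1 M2 :
  toC c * qFisher f U lam (commutator D M1) (commutator D M2) =
  \sum_i \sum_j toC (c * (mean f (lam i) (lam j))^-1 * (lam i - lam j) ^+ 2)
     * Num.conj (coord M1 i j) * coord M2 i j.
Proof.
rewrite /qFisher /= !coord_commutator mulr_sumr; apply: eq_bigr => i _.
rewrite mulr_sumr; apply: eq_bigr => j _.
rewrite !commutator_diag_mxE !mxE rmorphM rmorphB /= !toC_conj.
by rewrite !toCE !rmorphM rmorphB /=; ring.
Qed.

Lemma lin_dependent_coord m (B : 'I_m -> 'M[C]_n) :
  lin_dependent B <-> rows_dependent (fun a (s : 'I_n * 'I_n) => coord (B a) s.1 s.2).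
Proof.
have coord_sum k : coord (\sum_a k a *: B a) = \sum_a k a *: coord (B a).
  rewrite mulmx_sumr mulmx_suml; apply: eq_bigr => a _.
  by rewrite -scalemxAr -scalemxAl.
have sum_eq0 k : \sum_a k a *: B a = 0 <->
    forall s : 'I_n * 'I_n, \sum_a k a * coord (B a) s.1 s.2 = 0.
  split => [kB0 s|kB0].
    have := congr1 (fun M => coord M s.1 s.2) kB0.
    rewrite /= coord_sum mulmx0 mul0mx summxE mxE => sum0; rewrite -[RHS]sum0.
    by under [RHS]eq_bigr do rewrite mxE.
  rewrite -[LHS]coordK coord_sum.
  have -> : \sum_a k a *: coord (B a) = 0.
    apply/matrixP => i j; rewrite summxE mxE.
    by under eq_bigr do rewrite mxE; exact: kB0 (i, j).
  by rewrite mulmx0 mul0mx.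
by split=> -[k [k_nz kB0]]; exists k; split => //; apply/sum_eq0.
Qed.

End EigenCoordinates.

Unset Implicit Arguments.

Theorem theorem3 (R : realType) (n : nat) (D U : 'M[R[i]]_n) (lam : 'I_n -> R)
    (f g : R -> R) (c : R) (m : nat) (A : 'I_m -> 'M[R[i]]_n) :
  unitary U -> (forall i, 0 < lam i) -> D = udiag U lam -> \tr D = 1 ->
  standard f -> standard g -> 0 < c ->
  (forall x : R, 0 < x -> g x >= c * (x - 1) ^+ 2 / f x) ->
  (0 < m)%N ->
  (forall k, selfadjoint (A k)) ->
  let L := \det (\matrix_(i < m, j < m) qCov g U lam (A i) (A j)) in
  let Rt := \det (\matrix_(i < m, j < m)
               (toC c * qFisher f U lam (commutator D (A i)) (commutator D (A j)))) in
  let B := fun k => A k - (\tr (D *m A k)) *: (1%:M : 'M[R[i]]_n) in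
  [/\ L >= Rt,
      L = Rt <-> lin_dependent B &
      lin_dependent B -> L = 0 /\ Rt = 0].
Proof.
move=> U_unitary lam_gt0 D_udiag trD1 f_std g_std c_gt0 g_ge m_gt0 _ L Rt B.
pose Y a (s : 'I_n * 'I_n) := (mxstar U *m B a *m U) s.1 s.2.
pose w_cov (s : 'I_n * 'I_n) := toC (mean g (lam s.1) (lam s.2)).
pose w_fisher (s : 'I_n * 'I_n) :=
  toC (c * (mean f (lam s.1) (lam s.2))^-1 * (lam s.1 - lam s.2) ^+ 2).
have L_gram : L = \det (weighted_gram Y w_cov).
  rewrite /L; congr (\det _); apply/matrixP => a b; rewrite !mxE.
  rewrite (qCov_centered U_unitary D_udiag) //; last by case: g_std.
  by rewrite pair_bigA.
have Rt_gram : Rt = \det (weighted_gram Y w_fisher).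
  rewrite /Rt; congr (\det _); apply/matrixP => a b; rewrite !mxE.
  rewrite -(commutator_scalar_shift D (A a) (\tr (D *m A a))).
  rewrite -(commutator_scalar_shift D (A b) (\tr (D *m A b))).
  by rewrite (qFisher_commutator U_unitary D_udiag) pair_bigA.
have w_lt s : 0 <= w_fisher s < w_cov s.
  by rewrite /w_fisher /w_cov !toCE ler0c ltcR mean_weight_lt.
have B_dep : lin_dependent B <-> rows_dependent Y := lin_dependent_coord U_unitary B.
rewrite L_gram Rt_gram; split.
- by apply: det_weighted_gram_le => s; have /andP[-> /ltW] := w_lt s.
- exact: iff_trans (det_weighted_gram_eq _ m_gt0 w_lt) (iff_sym B_dep).
- by move=> /B_dep dep; rewrite !det_weighted_gram_dep.
Qed.
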